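(* Let $\chi\in M_{\mathbb{R}}$ with $r(\chi)=r$, and let $\lambda$ be a cocharacter of $SG(d)$ with $\chi\in F_r(\lambda)$. Then there exist $c\in\mathbb{R}$ and coefficients $c_\beta$ for $\beta\in\mathcal{W}$ with \[c_\beta=0 \text{ if } \langle\lambda,\beta\rangle<0,\qquad c_\beta=-r \text{ if } \langle\lambda,\beta\rangle>0,\qquad c_\beta\in[-r,0]\text{ if }\langle\lambda,\beta\rangle=0,\] such that $\chi=\sum_{\beta\in\mathcal{W}}c_\beta\beta+c\tau_d$. Conversely, every $\chi\in r\mathbb{W}$ of this form lies on $F_r(\lambda)$. Consequently, if $\mu$ is a cocharacter of $SG(d)$ with $F_r(\mu)\subset F_r(\lambda)$, then $\mu\ge\lambda$. Moreover, if $\chi\in F_r(\lambda)^{\mathrm{int}}$, then the coefficients $c_\beta$ with $\langle\lambda,\beta\rangle=0$ can be chosen in $(-r,0]$.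
   Context: Let $Q=(I,E)$ be a symmetric quiver (for all $i,j\in I$ the number of arrows $i\to j$ equals the number of arrows $j\to i$), with source and target maps $s,t$. Fix $d\in\mathbb{N}^I$ and let $R(d)=\bigoplus_{a\in E}\mathrm{Hom}(\mathbb{C}^{d_{s(a)}},\mathbb{C}^{d_{t(a)}})$ with $G(d)=\prod_i GL(d_i)$ acting by conjugation. Standing assumption: the subquiver of $Q$ on the vertices $i$ with $d_i\neq0$ is connected and is not the quiver with one vertex and no arrows. Let $M=\bigoplus_{i\in I,1\le j\le d_i}\mathbb{Z}\beta^i_j$ be the weight lattice of the diagonal torus $T(d)$, $M_{\mathbb{R}}=M\otimes\mathbb{R}$, $N$ the dual (coweight) lattice, $\langle\,,\rangle$ the pairing. Let $\mathcal{W}$ be the multiset of $T(d)$-weights of $R(d)$ (for each arrow $a:i\to j$ and $x\le d_i$, $y\le d_j$, the weight $\beta^j_y-\beta^i_x$). Let $\tau_d=(\sum_{i,j}\beta^i_j)/(\sum_i d_i)$ and $\mathbb{W}=\sum_{\beta\in\mathcal{W}}[0,\beta]+\mathbb{R}\tau_d\subset M_{\mathbb{R}}$ (Minkowski sum). For $\chi\in M_{\mathbb{R}}$, $r(\chi)$ is the smallest $r\ge0$ with $\chi\in r\mathbb{W}$. A cocharacter of $SG(d)$ (the kernel of the product of determinants) means here an element $\lambda\in N$ with $\langle\lambda,\sum_{i,j}\beta^i_j\rangle=0$. Set $N^{\lambda>0}:=\sum_{\beta\in\mathcal{W},\,\langle\lambda,\beta\rangle>0}\beta$. For $r\ge0$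 let $H_r(\lambda)=\{\psi\in M_{\mathbb{R}}:\langle\lambda,\psi\rangle+r\langle\lambda,N^{\lambda>0}\rangle=0\}$ and $F_r(\lambda)=H_r(\lambda)\cap r\mathbb{W}$. Write $\mu\ge\lambda$ if every $\beta\in\mathcal{W}$ with $\langle\lambda,\beta\rangle>0$ satisfies $\langle\mu,\beta\rangle>0$, and $\mu>\lambda$ if $\mu\ge\lambda$ but not $\lambda\ge\mu$. Let $F_r(\lambda)^{\mathrm{int}}:=F_r(\lambda)\setminus\bigcup_{\mu>\lambda}F_r(\mu)$. *)

From HB Require Import structures.
From mathcomp Require Import all_boot all_order all_algebra.
From mathcomp Require Import reals.
Set Implicit Arguments.
Unset Strict Implicit.
Unset Printing Implicit Defensive.
Import Order.TTheory GRing.Theory Num.Theory.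
Local Open Scope ring_scope.

Section QuiverWeights.
Variables (R : realType) (I E : finType) (s t : E -> I) (d : I -> nat).

Definition symmetric_quiver : Prop :=
  forall i j : I, #|[pred a | (s a == i) && (t a == j)]|%N =
                  #|[pred a | (s a == j) && (t a == i)]|%N.

Definition supp (i : I) : bool := d i != 0%N.
Definition supp_adj : rel I := fun i j =>
  [&& supp i, supp j &
      [exists a, ((s a == i) && (t a == j)) || ((s a == j) && (t a == i))]].

(** Standing assumption: the full subquiver on {i | d_i <> 0} is (nonempty and)
    connected, and is not the quiver with one vertex and no arrows. *)
Definition standing_assumption : Prop :=
  [/\ exists i, supp i,
      forall i j, supp i -> supp j -> connect supp_adj i j
    & ~ (exists i, (forall j, supp j -> j = i) /\
                   (forall a : E, ~ (s a = i /\ t a = i)))].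

(** Index set of the basis beta^i_j of M: pairs (i, j) with j < d_i. *)
Local Notation K := {i : I & 'I_(d i)}.
(** Index set of the multiset W: (a, x, y) with x < d_{s a}, y < d_{t a}. *)
Local Notation Wi := {a : E & ('I_(d (s a)) * 'I_(d (t a)))%type}.

(** Elements of M_R are functions K -> R, elements of N are functions K -> int. *)
Definition pairing (l : K -> int) (v : K -> R) : R :=
  \sum_(k : K) (l k)%:~R * v k.

(** The weight beta^{t a}_y - beta^{s a}_x attached to b = (a, x, y). *)
Definition wsrc (b : Wi) : K := Tagged (fun i => 'I_(d i)) (tagged b).1.
Definition wtgt (b : Wi) : K := Tagged (fun i => 'I_(d i)) (tagged b).2.
Definition wt (b : Wi) : K -> R :=
  fun k => (k == wtgt b)%:R - (k == wsrc b)%:R.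

(** tau_d = (sum_{i,j} beta^i_j) / (sum_i d_i). *)
Definition tau : K -> R := fun _ => ((\sum_(i : I) d i)%N)%:R^-1.

(** Cocharacters of SG(d): <lambda, sum beta^i_j> = 0. *)
Definition SG_cochar (l : K -> int) : Prop := \sum_(k : K) l k = 0.

(** The polytope-plus-line bW = sum_{beta in W} [0, beta] + R tau_d. *)
Definition in_bW (w : K -> R) : Prop :=
  exists (tt : Wi -> R) (c : R), (forall b, 0 <= tt b <= 1) /\
    forall k, w k = \sum_(b : Wi) tt b * wt b k + c * tau k.

Definition in_rbW (r : R) (v : K -> R) : Prop :=
  exists w, in_bW w /\ forall k, v k = r * w k.

Definition r_of_is (chi : K -> R) (r : R) : Prop :=
  [/\ 0 <= r, in_rbW r chi & forall r', 0 <= r' -> in_rbW r' chi -> r <= r'].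

Definition Npos (l : K -> int) : K -> R :=
  fun k => \sum_(b : Wi | 0 < pairing l (wt b)) wt b k.

Definition in_H (r : R) (l : K -> int) (psi : K -> R) : Prop :=
  pairing l psi + r * pairing l (Npos l) = 0.

Definition in_F (r : R) (l : K -> int) (psi : K -> R) : Prop :=
  in_H r l psi /\ in_rbW r psi.

Definition cochar_ge (mu l : K -> int) : Prop :=
  forall b : Wi, 0 < pairing l (wt b) -> 0 < pairing mu (wt b).
Definition cochar_gt (mu l : K -> int) : Prop :=
  cochar_ge mu l /\ ~ cochar_ge l mu.

Definition in_Fint (r : R) (l : K -> int) (psi : K -> R) : Prop :=
  in_F r l psi /\ forall mu, SG_cochar mu -> cochar_gt mu l -> ~ in_F r mu psi.

Definition of_form (strict : bool) (r : R) (l : K -> int) (chi : K -> R) : Prop :=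
  exists (cb : Wi -> R) (c : R),
    [/\ forall b, pairing l (wt b) < 0 -> cb b = 0,
        forall b, 0 < pairing l (wt b) -> cb b = - r,
        forall b, pairing l (wt b) = 0 ->
                  (if strict then - r < cb b else - r <= cb b) /\ cb b <= 0
      & forall k, chi k = \sum_(b : Wi) cb b * wt b k + c * tau k].

End QuiverWeights.

(* Write chi = sum_beta x_beta beta + c tau_d with 0 <= x_beta <= r.  Pairing
   with lambda, the equation of H_r(lambda) says that x minimises the linear
   form x |-> sum_beta x_beta <lambda, beta> over the box [0, r]^W, which forces
   x_beta = r where <lambda, beta> < 0 and x_beta = 0 where <lambda, beta> > 0.
   As Q is symmetric, beta |-> -beta permutes W, and c_beta := -x_(-beta) is the
   required form.  Testing F_r(mu) subset F_r(lambda) on the point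
   sum_(<mu,beta> < 0) r beta of F_r(mu) gives mu >= lambda.
   In the interior case, let c_beta = -r with <lambda, beta> = 0.  Either the
   coefficients can be moved along a cycle of weights in ker lambda through
   beta so as to raise c_beta, or the vertices reachable from the target of
   beta form a cut S, and refining lambda by the indicator of S yields a
   cocharacter mu > lambda with chi in F_r(mu).  Iterated midpoints of the
   coefficient vectors obtained for the various beta are strict everywhere. *)

From Pilot Require Import Defs.
From HB Require Import structures.
From mathcomp Require Import all_boot all_order all_algebra.
From mathcomp Require Import reals ring lra zify.
Import Order.TTheory GRing.Theory Num.Theory.
Local Open Scope ring_scope.
Set Implicit Arguments.
Unset Strict Implicit.
Unset Printing Implicit Defensive.

Lemma sumr_mul_delta (T : finType) (R : pzRingType) (F : T -> R) (y : T) :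
  \sum_x F x * (x == y)%:R = F y.
Proof.
rewrite (bigD1 y) //= eqxx mulr1 big1 ?addr0 // => x /negbTE ->.
by rewrite mulr0.
Qed.

Lemma sumr_delta_mul (T : finType) (R : pzRingType) (F : T -> R) (y : T) :
  \sum_x (x == y)%:R * F x = F y.
Proof.
rewrite (bigD1 y) //= eqxx mul1r big1 ?addr0 // => x /negbTE ->.
by rewrite mul0r.
Qed.

(* The right-hand side is the minimum of the linear form over the box [0, r]^T. *)
Lemma box_sum_min_eq (T : finType) (R : realDomainType) (r : R) (f x : T -> R) :
  (forall i, 0 <= x i <= r) ->
  \sum_i x i * f i = \sum_(i | f i < 0) r * f i ->
  forall i, (f i < 0 -> x i = r) /\ (0 < f i -> x i = 0).
Proof.
move=> x_box sum_min.
pose g i := x i * f i - (if f i < 0 then r * f i else 0).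
have g_ge0 i : 0 <= g i.
  rewrite /g; have /andP[x0 xr] := x_box i.
  by case: ifP => [fneg | /negbT]; [nra | rewrite -leNgt subr0 => ?; nra].
have g_sum : \sum_i g i = 0 by rewrite sumrB sum_min -big_mkcond subrr.
move=> i; have /eqP gi := psumr_eq0P (fun i _ => g_ge0 i) g_sum (i := i) isT.
split=> [fneg | fpos].
  by move: gi; rewrite /g fneg -mulrBl mulf_eq0 subr_eq0 (lt_eqF fneg) orbF => /eqP.
by move: gi; rewrite /g ltNge (ltW fpos) subr0 mulf_eq0 (gt_eqF fpos) orbF => /eqP.
Qed.

Lemma fin_uniform_pos (T : finType) (R : realDomainType) (P : T -> R -> Prop) :
  (forall i, exists2 e, 0 < e & forall e', 0 < e' <= e -> P i e') ->
  exists2 e, 0 < e & forall i, P i e.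
Proof.
move=> locP.
have /fin_all_exists [e e_spec] :
    forall i, exists e : R, 0 < e /\ forall e', 0 < e' <= e -> P i e'.
  by move=> i; have [e ? ?] := locP i; exists e.
have min_gt0 : 0 < \big[Order.min/1]_i e i.
  by apply: lt_bigmin => // i _; case: (e_spec i).
exists (\big[Order.min/1]_i e i) => // i.
by case: (e_spec i) => _; apply; rewrite min_gt0 bigmin_le.
Qed.

Lemma interval_perturb (R : realFieldType) (r c v : R) :
  - r <= c <= 0 -> (0 < v -> c < 0) -> (v < 0 -> - r < c) ->
  exists2 e, 0 < e & forall e', 0 < e' <= e -> - r <= c + e' * v <= 0.
Proof.
move=> /andP[cr c0] vpos vneg; case: (ltrgtP v 0) => [v_lt0 | v_gt0 | ->].
- have c_gt := vneg v_lt0.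
  exists ((c + r) / - v) => [|e' /andP[e0]]; first by rewrite divr_gt0 ?oppr_gt0; lra.
  by rewrite ler_pdivlMr ?oppr_gt0 // => ?; nra.
- have c_lt := vpos v_gt0.
  exists (- c / v) => [|e' /andP[e0]]; first by rewrite divr_gt0 ?oppr_gt0.
  by rewrite ler_pdivlMr // => ?; nra.
- by exists 1 => // e' _; rewrite mulr0 addr0; lra.
Qed.

Section Weights.
Variables (R : realType) (I E : finType) (s t : E -> I) (d : I -> nat).
Local Notation K := {i : I & 'I_(d i)}.
Local Notation Wi := {a : E & ('I_(d (s a)) * 'I_(d (t a)))%type}.
Local Notation wsrc := (@wsrc I E s t d).
Local Notation wtgt := (@wtgt I E s t d).
Local Notation wt := (@wt R I E s t d).
Local Notation tau := (@tau R I d).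

Definition wcomb (x : Wi -> R) (c : R) : K -> R :=
  fun k => \sum_b x b * wt b k + c * tau k.

Definition form_coeffs (strict : bool) (r : R) (l : K -> int) (chi : K -> R)
    (cb : Wi -> R) (c : R) : Prop :=
  [/\ forall b, pairing l (wt b) < 0 -> cb b = 0,
      forall b, 0 < pairing l (wt b) -> cb b = - r,
      forall b, pairing l (wt b) = 0 ->
                (if strict then - r < cb b else - r <= cb b) /\ cb b <= 0
    & chi =1 wcomb cb c].

Lemma eq_pairing (l : K -> int) (v v' : K -> R) :
  v =1 v' -> pairing l v = pairing l v'.
Proof. by move=> eq_v; apply: eq_bigr => k _; rewrite eq_v. Qed.

Lemma pairing_wt (l : K -> int) (b : Wi) :
  pairing l (wt b) = (l (wtgt b) - l (wsrc b))%:~R.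
Proof.
rewrite /pairing /Defs.wt.
under eq_bigr do rewrite mulrBr.
by rewrite sumrB !sumr_mul_delta intrB.
Qed.

Lemma pairing_wcomb (l : K -> int) (x : Wi -> R) (c : R) :
  pairing l (wcomb x c) = \sum_b x b * pairing l (wt b) + c * pairing l tau.
Proof.
rewrite /pairing /wcomb.
under eq_bigr do rewrite mulrDr mulr_sumr.
rewrite big_split /= exchange_big mulr_sumr; congr (_ + _).
  by apply: eq_bigr => b _; rewrite mulr_sumr; apply: eq_bigr => k _; rewrite mulrCA.
by apply: eq_bigr => k _; rewrite mulrCA.
Qed.

Lemma pairing_tau (l : K -> int) : SG_cochar l -> pairing l tau = 0.
Proof.
by move=> l_SG; rewrite /pairing /tau -mulr_suml -rmorph_sum l_SG mul0r.
Qed.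

Lemma pairing_Npos (l : K -> int) :
  pairing l (Npos R s t l) = \sum_(b | 0 < pairing l (wt b)) pairing l (wt b).
Proof.
rewrite /pairing /Npos.
under eq_bigr do rewrite mulr_sumr.
by rewrite exchange_big.
Qed.

Lemma in_rbW_wcomb (r : R) (chi : K -> R) : 0 <= r -> in_rbW s t r chi ->
  exists x c, (forall b, 0 <= x b <= r) /\ chi =1 wcomb x c.
Proof.
move=> r_ge0 [w [[y [c [y_01 w_eq]]] chi_eq]].
exists (fun b => r * y b), (r * c); split=> [b | k].
  by have /andP[? ?] := y_01 b; apply/andP; split; nra.
rewrite chi_eq w_eq mulrDr mulr_sumr mulrA /wcomb; congr (_ + _).
by apply: eq_bigr => b _; rewrite mulrA.
Qed.

Lemma wcomb_in_rbW (r : R) (x : Wi -> R) (c : R) : 0 < r ->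
  (forall b, 0 <= x b <= r) -> in_rbW s t r (wcomb x c).
Proof.
move=> r_gt0 x_box; exists (wcomb (fun b => x b / r) (c / r)); split.
  exists (fun b => x b / r), (c / r); split=> // b.
  by rewrite divr_ge0 ?ler_pdivrMr ?mul1r ?(ltW r_gt0); have /andP[] := x_box b.
have r_neq0 : r != 0 by rewrite gt_eqF.
move=> k; rewrite /wcomb mulrDr mulr_sumr; congr (_ + _); last by field.
by apply: eq_bigr => b _; field.
Qed.

Lemma in_F_of_form (r : R) (l : K -> int) (chi : K -> R) :
  SG_cochar l -> in_rbW s t r chi -> of_form s t false r l chi ->
  in_F s t r l chi.
Proof.
move=> l_SG chi_rbW [cb [c [cb_neg cb_pos _ chi_eq]]]; split=> //.
rewrite /in_H (eq_pairing l chi_eq) pairing_wcomb pairing_tau // mulr0 addr0.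
rewrite pairing_Npos (bigID (fun b => 0 < pairing l (wt b))) /=.
rewrite [X in _ + X + _]big1 ?addr0 => [|b].
  by rewrite mulr_sumr -big_split big1 // => b /cb_pos ->; rewrite /= mulNr addNr.
rewrite -leNgt le_eqVlt => /orP[/eqP -> | /cb_neg ->]; by rewrite ?mulr0 ?mul0r.
Qed.

Section Symmetric.
Hypothesis symQ : symmetric_quiver s t.

Definition arrows (i j : I) : seq E := enum [pred a | (s a == i) && (t a == j)].

Definition arrow_rev (a : E) : E :=
  nth a (arrows (t a) (s a)) (index a (arrows (s a) (t a))).

Lemma size_arrows (i j : I) : size (arrows i j) = size (arrows j i).
Proof. by rewrite -!cardE symQ. Qed.

Lemma arrow_rev_in (a : E) : arrow_rev a \in arrows (t a) (s a).
Proof. by apply: mem_nth; rewrite -size_arrows index_mem mem_enum inE !eqxx. Qed.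

Lemma arrow_rev_s (a : E) : s (arrow_rev a) = t a.
Proof. by have := arrow_rev_in a; rewrite mem_enum inE => /andP[/eqP]. Qed.

Lemma arrow_rev_t (a : E) : t (arrow_rev a) = s a.
Proof. by have := arrow_rev_in a; rewrite mem_enum inE => /andP[_ /eqP]. Qed.

Lemma arrow_rev_inj : injective arrow_rev.
Proof.
move=> a a' eq_rev.
have et : t a = t a' by rewrite -arrow_rev_s eq_rev arrow_rev_s.
have es : s a = s a' by rewrite -arrow_rev_t eq_rev arrow_rev_t.
move: eq_rev; rewrite /arrow_rev -et -es.
have a_in : a \in arrows (s a) (t a) by rewrite mem_enum inE !eqxx.
have a'_in : a' \in arrows (s a) (t a) by rewrite mem_enum inE es et !eqxx.
have lt_idx a'' : a'' \in arrows (s a) (t a) ->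
    (index a'' (arrows (s a) (t a)) < size (arrows (t a) (s a)))%N.
  by rewrite -size_arrows index_mem.
rewrite [in RHS](set_nth_default a a' (lt_idx a' a'_in)) => /eqP.
rewrite nth_uniq ?enum_uniq ?lt_idx // => /eqP eq_idx.
by rewrite -(nth_index a a_in) eq_idx nth_index.
Qed.

Lemma tagged_cast_ord (i j : I) (e : i = j) (y : 'I_(d j)) :
  Tagged (fun i => 'I_(d i)) (cast_ord (congr1 d (esym e)) y) =
  Tagged (fun i => 'I_(d i)) y.
Proof. by case: j / e y => y; rewrite cast_ord_id. Qed.

Definition windex_rev (b : Wi) : Wi :=
  Tagged (fun a => ('I_(d (s a)) * 'I_(d (t a)))%type)
    (cast_ord (congr1 d (esym (arrow_rev_s (tag b)))) (tagged b).2,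
     cast_ord (congr1 d (esym (arrow_rev_t (tag b)))) (tagged b).1).

Lemma wsrc_rev (b : Wi) : wsrc (windex_rev b) = wtgt b.
Proof. exact: tagged_cast_ord. Qed.

Lemma wtgt_rev (b : Wi) : wtgt (windex_rev b) = wsrc b.
Proof. exact: tagged_cast_ord. Qed.

Lemma windex_eq (b b' : Wi) :
  tag b = tag b' -> wsrc b = wsrc b' -> wtgt b = wtgt b' -> b = b'.
Proof.
case: b => a [x y]; case: b' => a' [x' y'] /= eq_a; subst a'.
rewrite /Defs.wsrc /Defs.wtgt /= => /eqP eq_x /eqP eq_y.
by move: eq_x eq_y; rewrite !eq_Tagged /= => /eqP -> /eqP ->.
Qed.

Lemma windex_rev_inj : injective windex_rev.
Proof.
move=> b b' eq_rev; apply: windex_eq.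
- by apply: arrow_rev_inj; have := congr1 tag eq_rev.
- by rewrite -wtgt_rev eq_rev wtgt_rev.
- by rewrite -wsrc_rev eq_rev wsrc_rev.
Qed.

Lemma wt_rev (b : Wi) (k : K) : wt (windex_rev b) k = - wt b k.
Proof. by rewrite /Defs.wt wsrc_rev wtgt_rev opprB. Qed.

Lemma pairing_wt_rev (l : K -> int) (b : Wi) :
  pairing l (wt (windex_rev b)) = - pairing l (wt b).
Proof. by rewrite !pairing_wt wsrc_rev wtgt_rev -intrN opprB. Qed.

Lemma wcomb_rev (x : Wi -> R) (c : R) :
  wcomb x c =1 wcomb (fun b => - x (windex_rev b)) c.
Proof.
move=> k; rewrite /wcomb (reindex_inj windex_rev_inj); congr (_ + _).
by apply: eq_bigr => b _; rewrite wt_rev mulrN mulNr.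
Qed.

Lemma sum_pairing_lt0 (l : K -> int) :
  \sum_(b | pairing l (wt b) < 0) pairing l (wt b) =
  - \sum_(b | 0 < pairing l (wt b)) pairing l (wt b).
Proof.
rewrite (reindex_inj windex_rev_inj) /=.
under eq_bigl do rewrite pairing_wt_rev oppr_lt0.
by under eq_bigr do rewrite pairing_wt_rev; rewrite sumrN.
Qed.

Lemma in_H_wcombP (r : R) (l : K -> int) (chi : K -> R) (x : Wi -> R) (c : R) :
  SG_cochar l -> chi =1 wcomb x c ->
  in_H s t r l chi <->
  \sum_b x b * pairing l (wt b) = \sum_(b | pairing l (wt b) < 0) r * pairing l (wt b).
Proof.
move=> l_SG chi_eq; rewrite /in_H (eq_pairing l chi_eq) pairing_wcomb pairing_tau // mulr0 addr0 pairing_Npos.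
rewrite -mulr_sumr sum_pairing_lt0 mulrN.
by split=> [/eqP | ->]; [rewrite addr_eq0 => /eqP | rewrite addNr].
Qed.

Lemma of_form_of_in_H (r : R) (l : K -> int) (chi : K -> R) :
  0 <= r -> SG_cochar l -> in_rbW s t r chi -> in_H s t r l chi ->
  of_form s t false r l chi.
Proof.
move=> r_ge0 l_SG /(in_rbW_wcomb r_ge0) [x [c [x_box chi_eq]]].
move=> /(in_H_wcombP r l_SG chi_eq) /(box_sum_min_eq x_box) x_min.
exists (fun b => - x (windex_rev b)), c; split.
- by move=> b b_neg; rewrite (proj2 (x_min _)) ?oppr0 // pairing_wt_rev oppr_gt0.
- by move=> b b_pos; rewrite (proj1 (x_min _)) // pairing_wt_rev oppr_lt0.
- by move=> b _ /=; have /andP[? ?] := x_box (windex_rev b); split; lra.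
- by move=> k; rewrite chi_eq wcomb_rev.
Qed.

Lemma cochar_ge_of_F_subset (r : R) (l mu : K -> int) :
  0 < r -> SG_cochar l -> SG_cochar mu ->
  (forall psi, in_F s t r mu psi -> in_F s t r l psi) -> cochar_ge R s t mu l.
Proof.
move=> r_gt0 l_SG mu_SG F_sub.
pose x b := if pairing mu (wt b) < 0 then r else 0.
have x_box b : 0 <= x b <= r by rewrite /x; case: ifP => _; lra.
have [l_H _] : in_F s t r l (wcomb x 0).
  apply: F_sub; split; last exact: wcomb_in_rbW.
  apply/(in_H_wcombP r mu_SG (frefl _)); rewrite [RHS]big_mkcond /=.
  by apply: eq_bigr => b _; rewrite /x; case: ifP; rewrite ?mul0r.
have x_min := box_sum_min_eq x_box (proj1 (in_H_wcombP r l_SG (frefl _)) l_H).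
move=> b b_pos; have := proj1 (x_min (windex_rev b)).
rewrite !pairing_wt_rev oppr_lt0 /x pairing_wt_rev oppr_lt0 => /(_ b_pos).
by case: ifP => // _ /eqP; rewrite eq_sym gt_eqF.
Qed.

End Symmetric.

(* l is doubled and scaled by #|K| so that adding the indicator of S only
   breaks ties, and shifted so that the result is again a cocharacter of SG(d). *)
Definition refine_cochar (l : K -> int) (S : pred K) : K -> int :=
  fun k => #|{: K}|%:Z * (2 * l k + (S k)%:Z) - \sum_k' (S k')%:Z.

Lemma SG_refine (l : K -> int) (S : pred K) :
  SG_cochar l -> SG_cochar (refine_cochar l S).
Proof.
rewrite /SG_cochar /refine_cochar => l_SG.
rewrite sumrB -mulr_sumr big_split /= -mulr_sumr l_SG mulr0 add0r.
by rewrite sumr_const -mulr_natl natz subrr.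
Qed.

Lemma pairing_refine (l : K -> int) (S : pred K) (b : Wi) :
  pairing (refine_cochar l S) (wt b) =
  (#|{: K}|%:Z * (2 * (l (wtgt b) - l (wsrc b))
                  + ((S (wtgt b))%:Z - (S (wsrc b))%:Z)))%:~R.
Proof. by rewrite pairing_wt /refine_cochar; congr (_%:~R); ring. Qed.

Lemma refine_sign (N a : int) (u v : bool) : 0 < N ->
  [/\ (0 < N * (2 * a + (u%:Z - v%:Z))) = (0 < a) || [&& a == 0, u & ~~ v],
      (N * (2 * a + (u%:Z - v%:Z)) < 0) = (a < 0) || [&& a == 0, v & ~~ u]
    & (N * (2 * a + (u%:Z - v%:Z)) == 0) = (a == 0) && (u == v)].
Proof.
move=> N_gt0; rewrite pmulr_rgt0 // pmulr_rlt0 // mulf_eq0 (gt_eqF N_gt0) /=.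
by case: u; case: v; rewrite /= ?subrr ?addr0; split; lia.
Qed.

Lemma pairing_refine_sign (l : K -> int) (S : pred K) (b : Wi) :
  let p := pairing l (wt b) in let q := pairing (refine_cochar l S) (wt b) in
  [/\ (0 < q) = (0 < p) || [&& p == 0, S (wtgt b) & ~~ S (wsrc b)],
      (q < 0) = (p < 0) || [&& p == 0, S (wsrc b) & ~~ S (wtgt b)]
    & (q == 0) = (p == 0) && (S (wtgt b) == S (wsrc b))].
Proof.
have N_gt0 : 0 < #|{: K}|%:Z by rewrite ltz_nat; apply/card_gt0P; exists (wsrc b).
have [gt0 lt0 eq0] := refine_sign (l (wtgt b) - l (wsrc b)) (S (wtgt b)) (S (wsrc b)) N_gt0.
by move=> p q; rewrite {}/p {}/q pairing_refine !pairing_wt !ltr0z !ltrz0 !intr_eq0 gt0 lt0 eq0.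
Qed.

Lemma cochar_gt_refine (l : K -> int) (S : pred K) (b0 : Wi) :
  pairing l (wt b0) = 0 -> S (wtgt b0) -> ~~ S (wsrc b0) ->
  cochar_gt R s t (refine_cochar l S) l.
Proof.
move=> p0 S_tgt S_src; split=> [b | ge_l].
  by have [-> _ _] := pairing_refine_sign l S b => ->.
have [gt0 _ _] := pairing_refine_sign l S b0.
by move: (ge_l b0); rewrite gt0 p0 eqxx S_tgt S_src ltxx orbT => /(_ isT).
Qed.

Lemma form_coeffs_refine (r : R) (l : K -> int) (chi : K -> R) (cb : Wi -> R)
    (c : R) (S : pred K) :
  form_coeffs false r l chi cb c ->
  (forall b, pairing l (wt b) = 0 -> S (wsrc b) -> ~~ S (wtgt b) -> cb b = 0) ->
  (forall b, pairing l (wt b) = 0 -> S (wtgt b) -> ~~ S (wsrc b) -> cb b = - r) ->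
  form_coeffs false r (refine_cochar l S) chi cb c.
Proof.
move=> [cb_neg cb_pos cb_zero chi_eq] cut_out cut_in.
split=> // b; have [gt0 lt0 eq0] := pairing_refine_sign l S b.
- rewrite lt0 => /orP[/cb_neg // | /and3P[/eqP p0 S_src S_tgt]].
  exact: cut_out.
- rewrite gt0 => /orP[/cb_pos // | /and3P[/eqP p0 S_tgt S_src]].
  exact: cut_in.
- by move/eqP; rewrite eq0 => /andP[/eqP /cb_zero].
Qed.

Lemma form_coeffs_midpoint (strict : bool) (r : R) (l : K -> int)
    (chi : K -> R) (cb1 cb2 : Wi -> R) (c : R) :
  form_coeffs false r l chi cb1 c -> form_coeffs strict r l chi cb2 c ->
  form_coeffs strict r l chi (fun b => (cb1 b + cb2 b) / 2) c.
Proof.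
move=> [neg1 pos1 zero1 eq1] [neg2 pos2 zero2 eq2]; split.
- by move=> b b_neg; rewrite neg1 // neg2 // addr0 mul0r.
- by move=> b b_pos; rewrite pos1 // pos2 //; field.
- move=> b b0; have [lo1 hi1] := zero1 b b0; have [lo2 hi2] := zero2 b b0.
  by case: strict lo2 {zero2} => /= lo2; split; lra.
- move=> k; rewrite eq1 /wcomb.
  have -> : \sum_b (cb1 b + cb2 b) / 2 * wt b k =
            (\sum_b cb1 b * wt b k + \sum_b cb2 b * wt b k) / 2.
    by rewrite -big_split mulr_suml; apply: eq_bigr => b _ /=; field.
  by have := eq2 k; rewrite eq1 /wcomb => /addIr ->; field.
Qed.

Section Interior.
Variables (r : R) (l : K -> int) (chi : K -> R) (c : R).
Hypotheses (r_gt0 : 0 < r) (l_SG : SG_cochar l) (chi_rbW : in_rbW s t r chi).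
Hypothesis chi_int :
  forall mu, SG_cochar mu -> cochar_gt R s t mu l -> ~ in_F s t r mu chi.
Local Notation p b := (pairing l (wt b)).
Local Notation valid cb := (form_coeffs false r l chi cb c).

Definition feasible_dir (cb dl : Wi -> R) : Prop :=
  forall b, [/\ dl b != 0 -> p b = 0, 0 < dl b -> cb b < 0 & dl b < 0 -> - r < cb b].

Lemma feasible_dirD (cb d1 d2 : Wi -> R) :
  feasible_dir cb d1 -> feasible_dir cb d2 -> feasible_dir cb (fun b => d1 b + d2 b).
Proof.
move=> dir1 dir2 b; have [ker1 pos1 neg1] := dir1 b; have [ker2 pos2 neg2] := dir2 b.
split=> [| sum_gt0 | sum_lt0].
- have [d1_0 | /ker1 //] := eqVneq (d1 b) 0.
  by rewrite d1_0 add0r => /ker2.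
- by case: (ltrP 0 (d1 b)) => [/pos1 // | d1_le0]; apply: pos2; lra.
- by case: (ltrP (d1 b) 0) => [/neg1 // | d1_ge0]; apply: neg2; lra.
Qed.

Lemma feasible_dir_delta (cb : Wi -> R) (b0 : Wi) (e : R) :
  p b0 = 0 -> (0 < e -> cb b0 < 0) -> (e < 0 -> - r < cb b0) ->
  feasible_dir cb (fun b => e * (b == b0)%:R).
Proof.
move=> p0 pos neg b; case: (eqVneq b b0) => [-> | _]; rewrite ?mulr1 ?mulr0 //.
by split=> //; rewrite ?eqxx ?ltxx.
Qed.

(* An arc x -> z is a weight beta = e_z - e_x in ker lambda whose coefficient
   can be increased, or a weight beta = e_x - e_z in ker lambda whose
   coefficient can be decreased. *)
Definition free_arc (cb : Wi -> R) : rel K := fun x z =>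
  [exists b, (p b == 0) &&
     ([&& wsrc b == x, wtgt b == z & cb b < 0] ||
      [&& wsrc b == z, wtgt b == x & - r < cb b])].

Lemma free_path_dir (cb : Wi -> R) (x : K) (q : seq K) :
  path (free_arc cb) x q -> exists dl, feasible_dir cb dl /\
    forall k, \sum_b dl b * wt b k = (k == last x q)%:R - (k == x)%:R.
Proof.
elim: q x => [|z q IHq] x /=.
  move=> _; exists (fun=> 0); split=> [b | k]; first by split; rewrite ?eqxx ?ltxx.
  by rewrite big1 ?subrr // => b _; rewrite mul0r.
case/andP=> /existsP[b /andP[/eqP p0 arc_b]] /IHq[dq [dq_dir dq_sum]].
have [e [e_dir wt_e]] : exists e : R, feasible_dir cb (fun b' => e * (b' == b)%:R)
    /\ forall k, e * wt b k = (k == z)%:R - (k == x)%:R.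
  case/orP: arc_b => /and3P[/eqP src_b /eqP tgt_b cb_b].
    exists 1; split=> [| k]; last by rewrite mul1r /Defs.wt src_b tgt_b.
    by apply: feasible_dir_delta => //; lra.
  exists (-1); split=> [| k]; last by rewrite mulN1r /Defs.wt src_b tgt_b opprB.
  by apply: feasible_dir_delta => //; lra.
exists (fun b' => e * (b' == b)%:R + dq b'); split; first exact: feasible_dirD.
move=> k; under eq_bigr do rewrite mulrDl -mulrA.
by rewrite big_split /= -mulr_sumr sumr_delta_mul wt_e dq_sum; ring.
Qed.

Lemma form_coeffs_perturb (cb dl : Wi -> R) :
  valid cb -> feasible_dir cb dl -> (forall k, \sum_b dl b * wt b k = 0) ->
  exists2 e, 0 < e & valid (fun b => cb b + e * dl b).
Proof.
move=> [cb_neg cb_pos cb_zero chi_eq] dl_dir dl_sum.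
have dl_ker b : p b != 0 -> dl b = 0.
  move=> p_neq0; have [ker _ _] := dl_dir b.
  by apply/eqP; apply: contraNT p_neq0 => /ker /eqP.
have [e e_gt0 e_ok] : exists2 e, 0 < e &
    forall b, p b = 0 -> - r <= cb b + e * dl b <= 0.
  apply: fin_uniform_pos => b; have [p0 | p_neq0] := eqVneq (p b) 0.
    have cb_b : - r <= cb b <= 0 by have [-> ->] := cb_zero b p0.
    have [_ pos neg] := dl_dir b; have [e e_gt0 e_ok] := interval_perturb cb_b pos neg.
    by exists e => // e' /e_ok.
  by exists 1 => // e' _ p0; rewrite p0 eqxx in p_neq0.
exists e => //; split=> [b b_neg | b b_pos | b /= p0 | k].
- by rewrite dl_ker ?lt_eqF // mulr0 addr0 cb_neg.
- by rewrite dl_ker ?gt_eqF // mulr0 addr0 cb_pos.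
- by have /andP[] := e_ok b p0.
- rewrite chi_eq /wcomb; congr (_ + _).
  under [RHS]eq_bigr do rewrite mulrDl -mulrA.
  by rewrite big_split /= -mulr_sumr dl_sum mulr0 addr0.
Qed.

Lemma free_arc_cut (cb : Wi -> R) (x : K) (b : Wi) :
  let S := connect (free_arc cb) x in
  valid cb -> p b = 0 ->
  (S (wsrc b) -> ~~ S (wtgt b) -> cb b = 0) /\
  (S (wtgt b) -> ~~ S (wsrc b) -> cb b = - r).
Proof.
move=> S [_ _ cb_zero _] p0; have [lo hi] := cb_zero b p0.
have arc_step y z : free_arc cb y z -> S y -> S z.
  by move=> yz Sy; apply: connect_trans Sy (connect1 yz).
split=> [S_src | S_tgt] /negP S_out.
- apply/eqP; rewrite eq_le hi leNgt; apply/negP => cb_lt0; apply: S_out.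
  by apply: arc_step S_src; apply/existsP; exists b; rewrite p0 !eqxx cb_lt0.
- apply/eqP; rewrite eq_le lo andbT leNgt; apply/negP => cb_gt; apply: S_out.
  by apply: arc_step S_tgt; apply/existsP; exists b; rewrite p0 !eqxx cb_gt orbT.
Qed.

Lemma form_coeffs_raise (cb : Wi -> R) (b0 : Wi) :
  valid cb -> p b0 = 0 -> exists2 cb', valid cb' & - r < cb' b0.
Proof.
move=> cb_valid p0; have [_ _ cb_zero _] := cb_valid.
have [cb_gt | cb_le] := ltrP (- r) (cb b0); first by exists cb.
have cb_b0 : cb b0 = - r by have [lo _] := cb_zero b0 p0; apply/eqP; rewrite eq_le cb_le.
pose S := connect (free_arc cb) (wtgt b0).
have [/connectP[q q_path q_last] | S_src] := boolP (S (wsrc b0)).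
  have [dq [dq_dir dq_sum]] := free_path_dir q_path.
  pose dl b := 1 * (b == b0)%:R + dq b.
  have dl_dir : feasible_dir cb dl.
    apply: feasible_dirD dq_dir; apply: feasible_dir_delta => //.
      by rewrite cb_b0 oppr_lt0.
    by rewrite ltr10.
  have dl_sum k : \sum_b dl b * wt b k = 0.
    under eq_bigr do rewrite mulrDl -mulrA.
    by rewrite big_split /= -mulr_sumr sumr_delta_mul dq_sum -q_last /Defs.wt; ring.
  have [e e_gt0 cb'_valid] := form_coeffs_perturb cb_valid dl_dir dl_sum.
  exists (fun b => cb b + e * dl b) => //.
  have dq_ge0 : 0 <= dq b0.
    by have [_ _ neg] := dq_dir b0; rewrite leNgt; apply/negP => /neg; rewrite cb_b0 ltxx.
  by rewrite /dl eqxx cb_b0 /=; nra.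
exfalso; apply: (chi_int (SG_refine S l_SG)).
  by apply: (cochar_gt_refine p0) => //; apply: connect0.
apply: in_F_of_form (SG_refine S l_SG) chi_rbW _; exists cb, c.
by apply: form_coeffs_refine => // b pb0; have [] := free_arc_cut (wtgt b0) cb_valid pb0.
Qed.

Lemma form_coeffs_strict_on (cb : Wi -> R) (bs : seq Wi) : valid cb ->
  exists2 cb', valid cb' & forall b, b \in bs -> p b = 0 -> - r < cb' b.
Proof.
move=> cb_valid; elim: bs => [|b bs [cb1 cb1_valid cb1_strict]].
  by exists cb.
have [cb2 cb2_valid cb2_b] : exists2 cb2, valid cb2 & p b = 0 -> - r < cb2 b.
  have [p0 | p_neq0] := eqVneq (p b) 0; last by exists cb1 => // p0; rewrite p0 eqxx in p_neq0.
  by have [cb2 ? ?] := form_coeffs_raise cb1_valid p0; exists cb2.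
exists (fun b' => (cb1 b' + cb2 b') / 2); first exact: form_coeffs_midpoint.
have [[_ _ zero1 _] [_ _ zero2 _]] := (cb1_valid, cb2_valid).
move=> b'; rewrite inE => /orP[/eqP -> | b'_in] p0.
  by have [lo1 _] := zero1 b p0; have := cb2_b p0; lra.
by have [lo2 _] := zero2 b' p0; have := cb1_strict b' b'_in p0; lra.
Qed.

Lemma of_form_strict (cb : Wi -> R) : valid cb -> of_form s t true r l chi.
Proof.
move=> /(form_coeffs_strict_on (enum {: Wi})) [cb' [? ? cb'_zero ?] strict].
exists cb', c; split=> // b p0; have [_ hi] := cb'_zero b p0.
by split=> //; apply: strict; rewrite ?mem_enum.
Qed.

End Interior.
End Weights.

Theorem proposition3p2 (R : realType) (I E : finType) (s t : E -> I)
    (d : I -> nat) :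
  symmetric_quiver s t -> standing_assumption s t d ->
  [/\ (* main claim *)
      forall (r : R) (l : {i : I & 'I_(d i)} -> int) (chi : {i : I & 'I_(d i)} -> R),
        SG_cochar l -> r_of_is s t chi r -> in_F s t r l chi ->
        of_form s t false r l chi,
      (* converse *)
      forall (r : R) (l : {i : I & 'I_(d i)} -> int) (chi : {i : I & 'I_(d i)} -> R),
        SG_cochar l -> 0 <= r -> in_rbW s t r chi -> of_form s t false r l chi ->
        in_F s t r l chi,
      (* consequence *)
      forall (r : R) (l mu : {i : I & 'I_(d i)} -> int),
        0 < r -> SG_cochar l -> SG_cochar mu ->
        (forall psi, in_F s t r mu psi -> in_F s t r l psi) ->
        cochar_ge R s t mu l
    & (* moreover *)
      forall (r : R) (l : {i : I & 'I_(d i)} -> int) (chi : {i : I & 'I_(d i)} -> R),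
        0 < r -> SG_cochar l -> r_of_is s t chi r -> in_Fint s t r l chi ->
        of_form s t true r l chi].
Proof.
move=> symQ _; split.
- by move=> r l chi l_SG [r_ge0 chi_rbW _] [chi_H _]; apply: of_form_of_in_H.
- by move=> r l chi l_SG _; apply: in_F_of_form.
- exact: cochar_ge_of_F_subset.
- move=> r l chi r_gt0 l_SG [_ chi_rbW _] [[chi_H _] chi_int].
  have [cb [c cb_valid]] := of_form_of_in_H symQ (ltW r_gt0) l_SG chi_rbW chi_H.
  exact: of_form_strict cb_valid.
Qed.
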